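(* Let $\mathbb{X}$ be a two-dimensional real Banach space. Then for any $x \in S_{\mathbb{X}}$ and any $\epsilon \in [0,1)$, there exists a normal cone $K$ in $\mathbb{X}$ such that $F(x,\epsilon) = K \cup (-K)$.
   Context: $S_{\mathbb{X}}=\{x\in\mathbb{X}:\|x\|=1\}$. For $x,y\in\mathbb{X}$ and $\epsilon\in[0,1)$, write $x \perp_D^{\epsilon} y$ if $\|x+\lambda y\| \geq \sqrt{1-\epsilon^2}\,\|x\|$ for all $\lambda\in\mathbb{R}$. Define $F(x,\epsilon)=\{y\in\mathbb{X} : x\perp_D^{\epsilon} y\}$. A subset $K\subseteq\mathbb{X}$ is a normal cone if (i) $K+K\subseteq K$, (ii) $\alpha K\subseteq K$ for all $\alpha\geq 0$, and (iii) $K\cap(-K)=\{0\}$. *)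

From HB Require Import structures.
From mathcomp Require Import all_boot all_order all_algebra.
From mathcomp Require Import all_classical all_reals all_analysis.
Set Implicit Arguments. Unset Strict Implicit. Unset Printing Implicit Defensive.
Import Order.TTheory GRing.Theory Num.Theory.
Import numFieldNormedType.Exports.
Local Open Scope classical_set_scope.
Local Open Scope ring_scope.

Definition dim2 (R : realType) (X : normedModType R) : Prop :=
  exists e1 e2 : X,
    (forall x : X, exists a b : R, x = a *: e1 + b *: e2) /\
    (forall a b : R, a *: e1 + b *: e2 = 0 -> a = 0 /\ b = 0).

Definition bj_eps_orth (R : realType) (X : normedModType R) (eps : R) (x y : X) : Prop :=
  forall lam : R, Num.sqrt (1 - eps ^+ 2) * `|x| <= `|x + lam *: y|.

Definition Fset (R : realType) (X : normedModType R) (x : X) (eps : R) : set X :=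
  [set y | bj_eps_orth eps x y].

Definition opp_set (R : realType) (X : normedModType R) (K : set X) : set X :=
  [set - y | y in K].

Definition normal_cone (R : realType) (X : normedModType R) (K : set X) : Prop :=
  (forall a b, K a -> K b -> K (a + b)) /\
  (forall (alpha : R) a, 0 <= alpha -> K a -> K (alpha *: a)) /\
  (K `&` opp_set K = [set 0]).

From HB Require Import structures.
From mathcomp Require Import all_boot all_order all_algebra.
From mathcomp Require Import all_classical all_reals all_analysis.
From mathcomp Require Import ring lra.
Set Implicit Arguments. Unset Strict Implicit.
Import Order.TTheory GRing.Theory Num.Theory.
Import numFieldNormedType.Exports.
Local Open Scope classical_set_scope.
Local Open Scope ring_scope.

(* Write F for F(x, eps) and c for sqrt(1 - eps^2). F is invariant under all
   real scalings and meets the line R x only in 0. In dimension two pick a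
   linear functional phi with kernel R x and set K := F ∩ {phi >= 0}; then
   F = K ∪ (-K) and K ∩ (-K) = {0}. If y1, y2 in F lie strictly on the same
   side of R x, then for every lambda the vector x + lambda (y1 + y2) can be
   written as t x + b y_i with |t| >= 1 for one of i = 1, 2, hence has norm at
   least |t| c >= c; so K is closed under addition. *)

Section Coordinates.
Variables (R : realType) (X : normedModType R) (e1 e2 : X).
Hypothesis span : forall y : X, exists a b : R, y = a *: e1 + b *: e2.
Hypothesis indep : forall a b : R, a *: e1 + b *: e2 = 0 -> a = 0 /\ b = 0.

Definition coord1 (y : X) : R := projT1 (cid (span y)).
Definition coord2 (y : X) : R := projT1 (cid (projT2 (cid (span y)))).

Lemma coordE y : y = coord1 y *: e1 + coord2 y *: e2.
Proof. exact: projT2 (cid (projT2 (cid (span y)))). Qed.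

Lemma coord_unique a b y : y = a *: e1 + b *: e2 -> coord1 y = a /\ coord2 y = b.
Proof.
move=> ey; have := @indep (coord1 y - a) (coord2 y - b).
rewrite !scalerBl addrACA -opprD -coordE -ey subrr => /(_ erefl) [/eqP h1 /eqP h2].
by split; apply/eqP; rewrite -subr_eq0.
Qed.

Lemma coord_linear r y w :
  coord1 (r *: y + w) = r * coord1 y + coord1 w /\
  coord2 (r *: y + w) = r * coord2 y + coord2 w.
Proof.
apply: coord_unique.
by rewrite {1}(coordE y) {1}(coordE w) scalerDr !scalerA !scalerDl addrACA.
Qed.

Lemma coord_line_ker (x y : X) : x != 0 ->
  coord2 y * coord1 x - coord1 y * coord2 x = 0 -> exists t : R, y = t *: x.
Proof.
move=> x_neq0; set p := coord1 x; set q := coord2 x => det0.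
have N_neq0 : p ^+ 2 + q ^+ 2 != 0.
  apply: contraNneq x_neq0 => N0.
  have [p0 q0] : p = 0 /\ q = 0 by split; nra.
  by rewrite (coordE x) -/p -/q p0 q0 !scale0r addr0.
exists ((coord1 y * p + coord2 y * q) / (p ^+ 2 + q ^+ 2)).
rewrite {1}(coordE y) {1}(coordE x) scalerDr !scalerA -/p -/q.
have [detp detq] : (coord2 y * p - coord1 y * q) * p = 0 /\
                   (coord2 y * p - coord1 y * q) * q = 0 by rewrite det0 !mul0r.
by congr (_ *: _ + _ *: _); rewrite mulrAC -[LHS](mulfK N_neq0); congr (_ / _); lra.
Qed.

End Coordinates.

Lemma dim2_line_kernel (R : realType) (X : normedModType R) (x : X) :
  dim2 X -> x != 0 ->
  exists phi : {scalar X}, forall y, phi y = 0 -> exists t : R, y = t *: x.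
Proof.
move=> [e1 [e2 [span indep]]] x_neq0.
pose u := coord1 span; pose v := coord2 span.
pose det y := v y * u x - u y * v x.
have det_scalar : scalar det.
  move=> r y w; rewrite /det /u /v.
  by case: (coord_linear span indep r y w) => -> ->; ring.
exists (HB.pack_for {scalar X} det (GRing.isLinear.Build R X R *%R det det_scalar)).
by move=> y det0; apply: coord_line_ker det0.
Qed.

Section ApproximateOrthogonality.
Variables (R : realType) (X : normedModType R) (x : X) (eps : R).

Let c := Num.sqrt (1 - eps ^+ 2).
Let F := Fset x eps.

Lemma Fset0 : F 0.
Proof.
move=> lam; rewrite scaler0 addr0 ler_piMl // -[leRHS]sqrtr1 ler_sqrt //.
by rewrite lerBlDr lerDl sqr_ge0.
Qed.

Lemma FsetZ a y : F y -> F (a *: y).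
Proof. by move=> Fy lam; rewrite scalerA; exact: Fy. Qed.

Lemma FsetN y : F y -> F (- y).
Proof. by rewrite -scaleN1r; exact: FsetZ. Qed.

Lemma Fset_lbound a b y : F y -> 1 <= `|a| -> c * `|x| <= `|a *: x + b *: y|.
Proof.
move=> Fy a_ge1; have a_neq0 : a != 0 by rewrite -normr_gt0 (lt_le_trans ltr01).
have -> : a *: x + b *: y = a *: (x + (b / a) *: y).
  by rewrite scalerDr scalerA mulrCA mulfV // mulr1.
rewrite normrZ -[leLHS]mul1r.
by apply: ler_pM (Fy _) => //; rewrite mulr_ge0 ?sqrtr_ge0.
Qed.

(* [p1 *: y2 - p2 *: y1 \in R x] with [p1, p2 > 0] says that [y1] and [y2]
   lie strictly on the same side of the line [R x]. *)
Lemma FsetD_same_side (p1 p2 tau : R) y1 y2 : 0 < p1 -> 0 < p2 ->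
  p1 *: y2 - p2 *: y1 = tau *: x -> F y1 -> F y2 -> F (y1 + y2).
Proof.
move=> p1_gt0 p2_gt0 e Fy1 Fy2 lam.
wlog lam_tau : p1 p2 tau y1 y2 p1_gt0 p2_gt0 e Fy1 Fy2 / 0 <= lam * tau.
  move=> hwlog; have [lam_tau|/ltW lam_tau] := leP 0 (lam * tau).
    exact: (hwlog p1 p2 tau y1 y2).
  rewrite [y1 + y2]addrC; apply: (hwlog p2 p1 (- tau) y2 y1) => //.
    by rewrite scaleNr -e opprB.
  by rewrite mulrN oppr_ge0.
have -> : x + lam *: (y1 + y2) =
          (1 + lam * tau / p1) *: x + (lam * (p1 + p2) / p1) *: y1.
  rewrite scalerDl scale1r -addrA; congr (x + _).
  have -> : lam * (p1 + p2) / p1 = lam + lam / p1 * p2 by field; rewrite gt_eqF.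
  rewrite mulrAC -scalerA -e scalerBr !scalerA divfK ?gt_eqF // scalerDl.
  by rewrite scalerDr addrACA addNr addr0 addrC.
have t_ge1 : 1 <= 1 + lam * tau / p1 by rewrite lerDl divr_ge0 // ltW.
by apply: Fset_lbound Fy1 _; rewrite ger0_norm // (le_trans ler01 t_ge1).
Qed.

Hypothesis x_neq0 : x != 0.
Hypothesis eps_sqr_lt1 : eps ^+ 2 < 1.

Lemma Fset_line a : F (a *: x) -> a = 0.
Proof.
move=> Fax; apply: contraTeq (Fax (- a^-1)) => a_neq0.
rewrite scalerA mulNr mulVf // scaleN1r subrr normr0 -ltNge.
by rewrite mulr_gt0 ?normr_gt0 // sqrtr_gt0 subr_gt0.
Qed.

Variable phi : {scalar X}.
Hypothesis phi_ker : forall y, phi y = 0 -> exists t : R, y = t *: x.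

Definition Fpos : set X := [set y | F y /\ 0 <= phi y].

Lemma Fset_ker y : F y -> phi y = 0 -> y = 0.
Proof.
by move=> Fy /phi_ker [t ey]; move: Fy; rewrite ey => /Fset_line ->; rewrite scale0r.
Qed.

Lemma FposD y1 y2 : Fpos y1 -> Fpos y2 -> Fpos (y1 + y2).
Proof.
move=> [Fy1 phi1_ge0] [Fy2 phi2_ge0]; split; last by rewrite linearD addr_ge0.
have [phi1_0|phi1_neq0] := eqVneq (phi y1) 0; first by rewrite (Fset_ker Fy1) ?add0r.
have [phi2_0|phi2_neq0] := eqVneq (phi y2) 0; first by rewrite (Fset_ker Fy2) ?addr0.
have [tau e] : exists tau, phi y1 *: y2 - phi y2 *: y1 = tau *: x.
  by apply: phi_ker; rewrite linearB !linearZ /= scalerN mulrC subrr.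
by apply: FsetD_same_side e Fy1 Fy2; rewrite lt_def ?phi1_neq0 ?phi2_neq0.
Qed.

Lemma Fpos_normal_cone : normal_cone Fpos.
Proof.
split; [exact: FposD | split].
  by move=> a y a_ge0 [Fy phi_ge0]; split; [exact: FsetZ | rewrite linearZ mulr_ge0].
apply/seteqP; split=> [y [[Fy phi_ge0] [w [_ phiw_ge0] wy]] | _ ->] /=.
  apply: Fset_ker => //; apply/eqP.
  by rewrite eq_le phi_ge0 -wy linearN oppr_le0 phiw_ge0.
have Fpos0 : Fpos 0 by split; [exact: Fset0 | rewrite linear0].
by split=> //; exists 0; rewrite ?oppr0.
Qed.

Lemma Fset_split : F = Fpos `|` opp_set Fpos.
Proof.
apply/seteqP; split=> [y Fy | y [[] // | [w [Fw _] <-]]]; last exact: FsetN.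
have [phi_ge0|phi_lt0] := leP 0 (phi y); first by left.
right; exists (- y); last exact: opprK.
by split; [exact: FsetN | rewrite linearN oppr_ge0 ltW].
Qed.

End ApproximateOrthogonality.

Theorem theorem2p1 (R : realType) (X : completeNormedModType R) :
  dim2 X ->
  forall (x : X) (eps : R), `|x| = 1 -> 0 <= eps < 1 ->
  exists K : set X, normal_cone K /\ Fset x eps = K `|` opp_set K.
Proof.
move=> dimX x eps x_norm1 /andP[eps_ge0 eps_lt1].
have x_neq0 : x != 0 by rewrite -normr_eq0 x_norm1 oner_neq0.
have eps_sqr_lt1 : eps ^+ 2 < 1 by nra.
have [phi phi_ker] := dim2_line_kernel dimX x_neq0.
exists (Fpos x eps phi); split.
- exact: Fpos_normal_cone.
- exact: Fset_split.
Qed.
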